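(* Let $\Sigma$ be a signature all of whose declarations are on standard form, over an unrestricted variable system, and write $\vdash\mathcal U$ for $\mathcal U\in\mathcal{J}(\Sigma)$. Let $y$ be a variable not in $\mathrm{V}(\Theta,A,a)$. (a) If $\vdash\Gamma,y:B,\Theta$ context, then $\vdash\Gamma,\Theta$ context. (b) If $\vdash A$ type $(\Gamma,y:B,\Theta)$, then $\vdash A$ type $(\Gamma,\Theta)$. (c) If $\vdash a:A\ (\Gamma,y:B,\Theta)$, then $\vdash a:A\ (\Gamma,\Theta)$.
   Context: Fix an infinite set $V$ of variables with decidable equality, and a fresh variable provider: functions $\varphi,\mathsf{fr}$ assigning to each finite $X\subseteq V$ an inhabited subset $\varphi(X)\subseteq V\setminus X$ and an element $\mathsf{fr}(X)\in\varphi(X)$. The variable system is unrestricted if $\varphi(X)=V\setminus X$ for all finite $X$. Fix disjoint sets $F$ (function symbols) and $T$ (type symbols) with decidable equality. Preelements are terms built from variables and symbols of $F$; a pretype is $S(t_1,\ldots,t_n)$ with $S\in T$ and $t_i$ preelements. $\mathrm{V}(E)$ is the set of variables of an expression $E$, $\equiv$ is syntactic identity, and $E[\bar a/\bar x]$ is simultaneous substitution. A precontext is a sequence $\Gamma=x_1:A_1,\ldots,x_n:A_n$ of pretypes with $x_k\in\varphi(\{x_1,\ldots,x_{k-1}\})$ and $\mathrm{V}(A_k)\subseteq\{x_1,\ldots,x_{k-1}\}$; $\mathrm{OV}(\Gamma)=x_1,\ldots,x_n$, $\mathrm{V}(\Gamma)=\{x_1,\ldots,x_n\}$, $\mathrm{Fresh}(\Gamma)=\varphi(\mathrm{V}(\Gamma))$,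 $\mathrm{fresh}(\Gamma)=\mathsf{fr}(\mathrm{V}(\Gamma))$, $E[\bar a/\Gamma]=E[\bar a/x_1,\ldots,x_n]$. Top variables: $\mathrm{TV}(\langle\rangle)=\emptyset$, $\mathrm{TV}(\Gamma,x:A)=(\mathrm{TV}(\Gamma)\setminus\mathrm{V}(A))\cup\{x\}$. A determining sequence for $\Gamma$ is a strictly increasing $\bar i=i_1,\ldots,i_k$ in $\{1,\ldots,n\}$ with $\mathrm{TV}(\Gamma)\subseteq\{x_{i_1},\ldots,x_{i_k}\}$; for $\bar a=a_1,\ldots,a_n$ put $\bar a_{\bar i}=a_{i_1},\ldots,a_{i_k}$. A type predeclaration is $(\Gamma,S,\bar i)$ with $S\in T$, $\bar i$ determining; a function predeclaration is $(\Gamma,f,\bar i,U)$ with $f\in F$, $\bar i$ determining, $U$ a pretype with $\mathrm{V}(U)\subseteq\mathrm{V}(\Gamma)$. A declaration is on standard form if $\bar i=1,2,\ldots,n$ where $n$ is the length of $\Gamma$. A presignature is a set $\Sigma$ of predeclarations with no symbol declared twice. Judgements are ''$\Gamma$ context'', ''$A$ type $(\Gamma)$'', ''$a:A\ (\Gamma)$''. $\mathcal{J}(\Sigma)$ is the smallest set of judgements closed under: (R1) $\langle\rangle$ context; (R2) from $\Gamma$ context and $A$ type $(\Gamma)$ infer $\Gamma,x:A$ context, for $x\in\mathrm{Fresh}(\Gamma)$; (R3) from $x_1:A_1,\ldots,x_n:A_n$ context infer $x_i:A_i\ (x_1:A_1,\ldots,x_n:A_n)$; (R4) if $(\Gamma,S,\bar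 i)\in\Sigma$ and $\bar a:\Delta\to\Gamma$, infer $S(\bar a_{\bar i})$ type $(\Delta)$; (R5) if $(\Gamma,f,\bar i,U)\in\Sigma$, $\bar a:\Delta\to\Gamma$ and $U[\bar a/\Gamma]$ type $(\Delta)$, infer $f(\bar a_{\bar i}):U[\bar a/\Gamma]\ (\Delta)$. Here, for $\Gamma=x_1:A_1,\ldots,x_n:A_n$, the context map ''$\bar a:\Delta\to\Gamma$'' abbreviates the $n+2$ judgements $\Delta$ context, $\Gamma$ context, and $a_k:A_k[a_1,\ldots,a_{k-1}/x_1,\ldots,x_{k-1}]\ (\Delta)$ for $k=1,\ldots,n$. $\Sigma$ is a signature if ($\Gamma$ context)$\in\mathcal{J}(\Sigma)$ whenever $(\Gamma,S,\bar i)\in\Sigma$, and ($U$ type $(\Gamma)$)$\in\mathcal{J}(\Sigma)$ whenever $(\Gamma,f,\bar i,U)\in\Sigma$. *)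

From Stdlib Require Import List Arith Sorting.Sorted.
Import ListNotations.
Set Implicit Arguments.

(** A fresh variable provider on a set of variables [V].
    Finite subsets X of V are represented by lists; [phi] and [fr] are
    required to depend only on the underlying set of the list. *)
Record FreshProvider (V : Type) := {
  phi : list V -> V -> Prop;
  fr : list V -> V;
  fr_in : forall X, phi X (fr X);
  phi_fresh : forall X x, phi X x -> ~ In x X;
  phi_ext : forall X Y, (forall z, In z X <-> In z Y) ->
              forall x, phi X x <-> phi Y x;
  fr_ext : forall X Y, (forall z, In z X <-> In z Y) -> fr X = fr Y
}.

Definition unrestricted (V : Type) (P : FreshProvider V) : Prop :=
  forall X x, phi P X x <-> ~ In x X.

Section Syntax.
Variables (V F T : Type).
Variable Vdec : forall x y : V, {x = y} + {x <> y}.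

Inductive pterm : Type :=
| Var : V -> pterm
| App : F -> list pterm -> pterm.

Inductive ptype : Type :=
| PType : T -> list pterm -> ptype.

Fixpoint vars_tm (t : pterm) : list V :=
  match t with
  | Var x => [x]
  | App _ ts => flat_map vars_tm ts
  end.

Definition vars_ty (A : ptype) : list V :=
  match A with PType _ ts => flat_map vars_tm ts end.

Fixpoint lookup (s : list (V * pterm)) (x : V) : pterm :=
  match s with
  | [] => Var x
  | (z, t) :: s' => if Vdec x z then t else lookup s' x
  end.

Fixpoint subst_tm (s : list (V * pterm)) (t : pterm) : pterm :=
  match t with
  | Var x => lookup s x
  | App f ts => App f (map (subst_tm s) ts)
  end.

Definition subst_ty (s : list (V * pterm)) (A : ptype) : ptype :=
  match A with PType Sy ts => PType Sy (map (subst_tm s) ts) end.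

Definition ctx := list (V * ptype).

Definition dom (G : ctx) : list V := map fst G.

Definition vars_ctx (G : ctx) : list V :=
  flat_map (fun p => fst p :: vars_ty (snd p)) G.

Definition precontext (phi : list V -> V -> Prop) (G : ctx) : Prop :=
  forall k x A, nth_error G k = Some (x, A) ->
    phi (firstn k (dom G)) x /\ incl (vars_ty A) (firstn k (dom G)).

Definition memb (z : V) (l : list V) : bool :=
  existsb (fun w => if Vdec z w then true else false) l.

(** top variables: TV(<>) = {}, TV(G, x:A) = (TV(G) \ V(A)) u {x} *)
Definition TV (G : ctx) : list V :=
  fold_left (fun acc p => fst p :: filter (fun z => negb (memb z (vars_ty (snd p)))) acc)
            G [].

(** determining sequence (indices are 1-based, as in the paper) *)
Definition determining (G : ctx) (idx : list nat) : Prop :=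
  Sorted lt idx /\
  (forall i, In i idx -> 1 <= i <= length G) /\
  (forall z, In z (TV G) -> exists i, In i idx /\ nth_error (dom G) (i - 1) = Some z).

Definition select (idx : list nat) (a : list pterm) : list pterm :=
  flat_map (fun i => match nth_error a (i - 1) with Some t => [t] | None => [] end) idx.

Inductive decl : Type :=
| TDecl : ctx -> T -> list nat -> decl
| FDecl : ctx -> F -> list nat -> ptype -> decl.

Definition predecl (phi : list V -> V -> Prop) (d : decl) : Prop :=
  match d with
  | TDecl G _ idx => precontext phi G /\ determining G idx
  | FDecl G _ idx U => precontext phi G /\ determining G idx /\ incl (vars_ty U) (dom G)
  end.

Definition presignature (phi : list V -> V -> Prop) (Sig : decl -> Prop) : Prop :=
  (forall d, Sig d -> predecl phi d) /\
  (forall G1 Sy i1 G2 i2, Sig (TDecl G1 Sy i1) -> Sig (TDecl G2 Sy i2) ->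
      G1 = G2 /\ i1 = i2) /\
  (forall G1 f i1 U1 G2 i2 U2, Sig (FDecl G1 f i1 U1) -> Sig (FDecl G2 f i2 U2) ->
      G1 = G2 /\ i1 = i2 /\ U1 = U2).

Definition standard_form (d : decl) : Prop :=
  match d with
  | TDecl G _ idx => idx = seq 1 (length G)
  | FDecl G _ idx _ => idx = seq 1 (length G)
  end.

Inductive judgement : Type :=
| JCtx : ctx -> judgement
| JType : ptype -> ctx -> judgement
| JElem : pterm -> ptype -> ctx -> judgement.

Definition ctx_subst (G : ctx) (a : list pterm) : list (V * pterm) :=
  combine (dom G) a.

(** J(Σ): the smallest set of judgements closed under (R1)-(R5).
    The context map  ā : D -> G  is inlined in (R4),(R5). *)
Inductive derivable (phi : list V -> V -> Prop) (Sig : decl -> Prop)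
  : judgement -> Prop :=
| R1 : derivable phi Sig (JCtx [])
| R2 : forall G A x,
    derivable phi Sig (JCtx G) -> derivable phi Sig (JType A G) ->
    phi (dom G) x ->
    derivable phi Sig (JCtx (G ++ [(x, A)]))
| R3 : forall G i x A,
    derivable phi Sig (JCtx G) -> nth_error G i = Some (x, A) ->
    derivable phi Sig (JElem (Var x) A G)
| R4 : forall G Sy idx D a,
    Sig (TDecl G Sy idx) ->
    derivable phi Sig (JCtx D) -> derivable phi Sig (JCtx G) ->
    length a = length G ->
    (forall k x A t, nth_error G k = Some (x, A) -> nth_error a k = Some t ->
       derivable phi Sig
         (JElem t (subst_ty (combine (firstn k (dom G)) (firstn k a)) A) D)) ->
    derivable phi Sig (JType (PType Sy (select idx a)) D)
| R5 : forall G f idx U D a,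
    Sig (FDecl G f idx U) ->
    derivable phi Sig (JCtx D) -> derivable phi Sig (JCtx G) ->
    length a = length G ->
    (forall k x A t, nth_error G k = Some (x, A) -> nth_error a k = Some t ->
       derivable phi Sig
         (JElem t (subst_ty (combine (firstn k (dom G)) (firstn k a)) A) D)) ->
    derivable phi Sig (JType (subst_ty (ctx_subst G a) U) D) ->
    derivable phi Sig (JElem (App f (select idx a)) (subst_ty (ctx_subst G a) U) D).

Definition signature (phi : list V -> V -> Prop) (Sig : decl -> Prop) : Prop :=
  presignature phi Sig /\
  (forall G Sy idx, Sig (TDecl G Sy idx) -> derivable phi Sig (JCtx G)) /\
  (forall G f idx U, Sig (FDecl G f idx U) -> derivable phi Sig (JType U G)).

End Syntax.

Arguments Var {V F}.
Arguments App {V F}.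
Arguments PType {V F T}.
Arguments JCtx {V F T}.
Arguments JType {V F T}.
Arguments JElem {V F T}.

(** For a
    rule instance whose conclusion does not mention [y], no premise mentions [y] either:
    the context map [ā] consists of subterms of the conclusion because every declaration
    is on standard form ([ā_ī = ā]), and the types of the premises are instances of
    declared types by [ā].  The freshness side condition of (R2) survives the deletion
    since in an unrestricted system it only asks that the new variable avoid the context. *)
From Stdlib Require Import List Arith Lia.
Import ListNotations.

Lemma map_fst_combine (A B : Type) (l1 : list A) (l2 : list B) :
  length l1 = length l2 -> map fst (combine l1 l2) = l1.
Proof.
  revert l2; induction l1 as [|x l1 IH]; intros [|z l2] E; try discriminate; simpl; auto.
  f_equal; auto.
Qed.

Lemma In_remove_middle (A : Type) (l1 l2 : list A) (b p : A) :
  In p (l1 ++ b :: l2) -> p <> b -> In p (l1 ++ l2).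
Proof. rewrite !in_app_iff; simpl; intuition congruence. Qed.

Lemma unrestricted_phi_incl {V : Type} {P : FreshProvider V} {X Y : list V} {x : V} :
  unrestricted P -> incl X Y -> phi P Y x -> phi P X x.
Proof. intros Hunr HXY Hx; apply Hunr; apply Hunr in Hx; auto. Qed.

Section Strengthening.
Variables (V F T : Type).
Variable Vdec : forall x y : V, {x = y} + {x <> y}.

Fixpoint pterm_nested_ind (Q : pterm V F -> Prop) (HV : forall x, Q (Var x))
  (HA : forall f ts, Forall Q ts -> Q (App f ts)) (t : pterm V F) : Q t :=
  match t with
  | Var x => HV x
  | App f ts => HA f ts
     ((fix go (l : list (pterm V F)) : Forall Q l :=
        match l with
        | [] => Forall_nil _
        | t0 :: l' => Forall_cons _ (pterm_nested_ind Q HV HA t0) (go l')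
        end) ts)
  end.

Definition vars_range (s : list (V * pterm V F)) : list V :=
  flat_map (fun p => vars_tm (snd p)) s.

Lemma vars_lookup (s : list (V * pterm V F)) (x : V) :
  In x (map fst s) -> incl (vars_tm (lookup Vdec s x)) (vars_range s).
Proof.
  induction s as [|[z t] s IH]; simpl; [tauto|].
  intros Hx w Hw; apply in_app_iff.
  destruct (Vdec x z) as [->|Hxz]; [now left|].
  right; apply IH; [destruct Hx; congruence|exact Hw].
Qed.

Lemma vars_subst_tm (s : list (V * pterm V F)) (t : pterm V F) :
  incl (vars_tm t) (map fst s) -> incl (vars_tm (subst_tm Vdec s t)) (vars_range s).
Proof.
  induction t as [x|f ts IH] using pterm_nested_ind; simpl; intros Ht.
  - apply vars_lookup, Ht; simpl; auto.
  - induction IH as [|t ts Ht0 _ IHts]; simpl in *; [intros ? []|].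
    apply incl_app.
    + apply Ht0; intros w Hw; apply Ht, in_app_iff; auto.
    + apply IHts; intros w Hw; apply Ht, in_app_iff; auto.
Qed.

Lemma vars_subst_ty (s : list (V * pterm V F)) (A : ptype V F T) :
  incl (vars_ty A) (map fst s) -> incl (vars_ty (subst_ty Vdec s A)) (vars_range s).
Proof.
  destruct A as [S ts]; simpl; intros HA.
  rewrite flat_map_concat_map, map_map, <- flat_map_concat_map.
  intros w; rewrite in_flat_map; intros (t & Ht & Hw).
  apply (vars_subst_tm s t); [|exact Hw].
  intros z Hz; apply HA, in_flat_map; eauto.
Qed.

Lemma select_seq_suffix (pre a : list (pterm V F)) :
  select (seq (S (length pre)) (length a)) (pre ++ a) = a.
Proof.
  revert pre; induction a as [|t a IH]; intros pre; simpl; auto.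
  rewrite Nat.sub_0_r, nth_error_app2, Nat.sub_diag by lia; simpl; f_equal.
  replace (pre ++ t :: a) with ((pre ++ [t]) ++ a) by now rewrite <- app_assoc.
  replace (S (S (length pre))) with (S (length (pre ++ [t]))) by (rewrite length_app; simpl; lia).
  apply IH.
Qed.

Lemma select_seq_full (a : list (pterm V F)) : select (seq 1 (length a)) a = a.
Proof. exact (select_seq_suffix [] a). Qed.

Lemma vars_premise_type {ph : list V -> V -> Prop} {G : ctx V F T} {a : list (pterm V F)}
    {k : nat} {x : V} {A : ptype V F T} :
  precontext ph G -> nth_error G k = Some (x, A) -> length a = length G ->
  incl (vars_ty (subst_ty Vdec (combine (firstn k (dom G)) (firstn k a)) A))
       (flat_map (@vars_tm V F) a).
Proof.
  intros HG Hk Hl.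
  assert (k < length G) by (apply nth_error_Some; congruence).
  eapply incl_tran; [apply vars_subst_ty|].
  - rewrite map_fst_combine; [apply (HG _ _ _ Hk)|].
    rewrite !length_firstn; unfold dom; rewrite length_map; lia.
  - intros w; unfold vars_range; rewrite !in_flat_map; intros ([z t] & Hzt & Hw).
    exists t; split; [|exact Hw].
    apply in_combine_r in Hzt; rewrite <- (firstn_skipn k a); apply in_or_app; auto.
Qed.

Variables (P : FreshProvider V) (Sig : decl V F T -> Prop).
Hypothesis Hunr : unrestricted P.
Hypothesis Hpre : forall d, Sig d -> predecl Vdec (phi P) d.
Hypothesis Hstd : forall d, Sig d -> standard_form d.

Notation derivable := (derivable Vdec (phi P) Sig).

Definition strengthenable (J : judgement V F T) : Prop :=
  forall Gam Th y B, ~ In y (vars_ctx Th) ->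
  match J with
  | JCtx D => D = Gam ++ (y, B) :: Th -> derivable (JCtx (Gam ++ Th))
  | JType A D => D = Gam ++ (y, B) :: Th -> ~ In y (vars_ty A) ->
      derivable (JType A (Gam ++ Th))
  | JElem t A D => D = Gam ++ (y, B) :: Th -> ~ In y (vars_ty A) -> ~ In y (vars_tm t) ->
      derivable (JElem t A (Gam ++ Th))
  end.

Lemma context_map_strengthen (G Gam Th : ctx V F T) (y : V) (B : ptype V F T)
    (a : list (pterm V F)) :
  precontext (phi P) G -> length a = length G -> ~ In y (vars_ctx Th) ->
  ~ In y (flat_map (@vars_tm V F) a) ->
  (forall k x A t, nth_error G k = Some (x, A) -> nth_error a k = Some t ->
     strengthenable (JElem t (subst_ty Vdec (combine (firstn k (dom G)) (firstn k a)) A)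
                      (Gam ++ (y, B) :: Th))) ->
  forall k x A t, nth_error G k = Some (x, A) -> nth_error a k = Some t ->
    derivable (JElem t (subst_ty Vdec (combine (firstn k (dom G)) (firstn k a)) A) (Gam ++ Th)).
Proof.
  intros HG Hl HTh Ha IH k x A t Hk Ht.
  apply (IH k x A t Hk Ht Gam Th y B HTh eq_refl).
  - intros Hy; apply Ha, (vars_premise_type HG Hk Hl), Hy.
  - intros Hy; apply Ha, in_flat_map; eauto using nth_error_In.
Qed.

Lemma derivable_strengthenable (J : judgement V F T) : derivable J -> strengthenable J.
Proof.
  induction 1 as [|G A x HG IHG _ IHA Hx|G i x A _ IHG Hi
                 |G S idx D a HS _ IHD HGd _ Hl _ IHa
                 |G f idx U D a HS _ IHD HGd _ Hl _ IHa _ IHU];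
    intros Gam Th y B HTh E.
  - destruct Gam; discriminate.
  - destruct Th as [|p Th _] using rev_ind.
    + rewrite app_nil_r in *; apply app_inj_tail in E as [-> _]; assumption.
    + rewrite app_comm_cons, app_assoc in E; apply app_inj_tail in E as [-> <-].
      unfold vars_ctx in HTh; rewrite flat_map_app, in_app_iff in HTh; simpl in HTh.
      rewrite app_nil_r in HTh.
      rewrite app_assoc; apply R2.
      * apply (IHG Gam Th y B); [tauto|reflexivity].
      * apply (IHA Gam Th y B); [tauto|reflexivity|tauto].
      * eapply (unrestricted_phi_incl Hunr); [|exact Hx].
        unfold dom; rewrite !map_app; apply incl_app_app; [apply incl_refl|apply incl_tl, incl_refl].
  - intros _ Hxy; subst G; simpl in Hxy.
    apply nth_error_In, In_remove_middle in Hi; [|intros [=]; tauto].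
    apply In_nth_error in Hi as [j Hj].
    apply R3 with (i := j); [apply (IHG Gam Th y B HTh eq_refl)|exact Hj].
  - intros Hy; subst D; simpl in Hy.
    destruct (Hpre _ HS) as [HG _].
    rewrite (Hstd _ HS), <- Hl, select_seq_full in Hy.
    eapply R4; eauto using context_map_strengthen.
  - intros HU Ht; subst D; simpl in Ht.
    destruct (Hpre _ HS) as [HG _].
    rewrite (Hstd _ HS), <- Hl, select_seq_full in Ht.
    eapply R5; eauto using context_map_strengthen.
Qed.
End Strengthening.

Theorem mainTheorem4
  (V F T : Type)
  (Vdec : forall x y : V, {x = y} + {x <> y})
  (Fdec : forall x y : F, {x = y} + {x <> y})
  (Tdec : forall x y : T, {x = y} + {x <> y})
  (P : FreshProvider V)
  (Hunr : unrestricted P)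
  (Sig : decl V F T -> Prop)
  (Hsig : signature Vdec (phi P) Sig)
  (Hstd : forall d, Sig d -> standard_form d) :
  (* (a) *)
  (forall (Gam Th : ctx V F T) (y : V) (B : ptype V F T),
     ~ In y (vars_ctx Th) ->
     derivable Vdec (phi P) Sig (JCtx (Gam ++ (y, B) :: Th)) ->
     derivable Vdec (phi P) Sig (JCtx (Gam ++ Th))) /\
  (* (b) *)
  (forall (Gam Th : ctx V F T) (y : V) (B A : ptype V F T),
     ~ In y (vars_ctx Th) -> ~ In y (vars_ty A) ->
     derivable Vdec (phi P) Sig (JType A (Gam ++ (y, B) :: Th)) ->
     derivable Vdec (phi P) Sig (JType A (Gam ++ Th))) /\
  (* (c) *)
  (forall (Gam Th : ctx V F T) (y : V) (B A : ptype V F T) (a : pterm V F),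
     ~ In y (vars_ctx Th) -> ~ In y (vars_ty A) -> ~ In y (vars_tm a) ->
     derivable Vdec (phi P) Sig (JElem a A (Gam ++ (y, B) :: Th)) ->
     derivable Vdec (phi P) Sig (JElem a A (Gam ++ Th))).
Proof.
  destruct Hsig as [[Hpre _] _].
  pose proof (@derivable_strengthenable V F T Vdec P Sig Hunr Hpre Hstd) as Hstr.
  split; [|split].
  - intros Gam Th y B HTh H; exact (Hstr _ H Gam Th y B HTh eq_refl).
  - intros Gam Th y B A HTh HA H; exact (Hstr _ H Gam Th y B HTh eq_refl HA).
  - intros Gam Th y B A a HTh HA Ha H; exact (Hstr _ H Gam Th y B HTh eq_refl HA Ha).
Qed.
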